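(* Let $\Sigma$ be an alphabet with $|\Sigma|\geq 4$, let $\#\notin\Sigma$, let $S$ be a string of length $n$ over $\Sigma$, and let $P$ be a substring of $S$. Suppose that there is a string $S'$ obtained from $S$ by replacing the letters at $k$ positions with $\#$ such that $|\mathsf{occ}_S(P)|-|\mathsf{occ}_{S'}(P)|\geq y$ for some positive integer $y$. Then there is a string $S''\in\Sigma^n$ obtained from $S$ by $k$ substitutions with letters from $\Sigma$ (so $d_H(S,S'')\leq k$) such that $|\mathsf{occ}_S(P)|-|\mathsf{occ}_{S''}(P)|\geq y$.
   Context: $\mathsf{occ}_T(P)$ is the set of starting positions of occurrences of $P$ in $T$; $d_H$ is the Hamming distance between strings of equal length. *)

From mathcomp Require Import all_boot.
Set Implicit Arguments. Unset Strict Implicit. Unset Printing Implicit Defensive.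

Definition occ (A : eqType) (T P : seq A) : seq nat :=
  [seq i <- iota 0 (size T).+1 | (i + size P <= size T) && (take (size P) (drop i T) == P)].

Definition dH (A : eqType) (s t : seq A) : nat :=
  count (fun p : A * A => p.1 != p.2) (zip s t).

(* S' (over Sigma ∪ {#}, # encoded as None) is obtained from S by replacing
   the letters at exactly k positions with #. *)
Definition hash_masked (A : eqType) (S : seq A) (S' : seq (option A)) (k : nat) : Prop :=
  size S' = size S /\
  (forall i, i < size S -> nth None S' i = None \/ nth None S' i = nth None (map Some S) i) /\
  count (fun c => c == None) S' = k.

From mathcomp Require Import all_boot zify.
Set Implicit Arguments. Unset Strict Implicit. Unset Printing Implicit Defensive.

(* Fill the #'s one at a time with a letter that creates no new occurrence of
   P; occurrences are never destroyed, since no occurrence covers a #.  A new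
   occurrence through the filled position i must agree with the text away from
   i (a near-occurrence at i), and among the near-occurrences j1 < j2 < j3 at i
   the letters P[i-j1] and P[i-j3] coincide.  Hence at most two letters are
   forbidden at i and three letters suffice; the result has exactly the
   occurrences of S' and differs from S only at the k masked positions. *)

Section Occurrences.
Variables (A : eqType) (d : A).
Implicit Types (T Q : seq A).

Definition occurs_at T Q j :=
  (j + size Q <= size T) && (take (size Q) (drop j T) == Q).

Lemma occE T Q : occ T Q = filter (occurs_at T Q) (iota 0 (size T).+1).
Proof. by []. Qed.

Lemma occurs_atP T Q j :
  reflect (j + size Q <= size T /\
           forall x, x < size Q -> nth d T (j + x) = nth d Q x)
          (occurs_at T Q j).
Proof.
apply: (iffP andP) => [[hj /eqP E]|[hj H]]; split=> //.
  by move=> x hx; rewrite -E nth_take // nth_drop.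
apply/eqP/(@eq_from_nth _ d) => [|x]; rewrite size_take size_drop.
  by case: ltnP => //; lia.
move=> hx; have {}hx : x < size Q by move: hx; case: (ltnP (size Q)); lia.
by rewrite nth_take // nth_drop H.
Qed.

Lemma occ_map_inj (B : eqType) (f : A -> B) T Q :
  injective f -> occ (map f T) (map f Q) = occ T Q.
Proof.
move=> f_inj; rewrite /occ !size_map; apply: eq_filter => j.
by rewrite -map_drop -map_take (inj_eq (inj_map f_inj)).
Qed.

Definition near_occ T Q i j :=
  (j <= i < j + size Q) &&
  all (fun x => (j + x == i) || (nth d T (j + x) == nth d Q x)) (iota 0 (size Q)).

Lemma near_occP T Q i j :
  reflect (j <= i < j + size Q /\
           forall x, x < size Q -> j + x != i -> nth d T (j + x) = nth d Q x)
          (near_occ T Q i j).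
Proof.
apply: (iffP andP) => -[hj H]; split=> //.
  move=> x hx nx; move/allP/(_ x): H.
  by rewrite mem_iota (negbTE nx) => /(_ hx)/eqP.
apply/allP => x; rewrite mem_iota => /andP[_ hx].
by case: eqP => //= /eqP /(H x hx) ->.
Qed.

Lemma near_occ_letter_skip T Q i j1 j2 j3 :
  near_occ T Q i j1 -> near_occ T Q i j2 -> near_occ T Q i j3 ->
  j1 < j2 < j3 -> nth d Q (i - j1) = nth d Q (i - j3).
Proof.
move=> /near_occP[r1 c1] /near_occP[r2 c2] /near_occP[r3 c3] /andP[h12 h23].
(* Q[i-j3] = T[i-j3+j2] = Q[i-j3+j2-j1] = T[i+j2-j1] = Q[i-j1]. *)
have e1 := c2 (i - j3) ltac:(lia) ltac:(lia).
have e2 := c1 (j2 + (i - j3) - j1) ltac:(lia) ltac:(lia).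
have e3 := c3 (j2 + (i - j3) - j1) ltac:(lia) ltac:(lia).
have e4 := c2 (i - j1) ltac:(lia) ltac:(lia).
rewrite (_ : j1 + _ = j2 + (i - j3)) in e2; last by lia.
rewrite (_ : j3 + _ = j2 + (i - j1)) in e3; last by lia.
by rewrite -e4 e3 -e2 e1.
Qed.

Lemma near_occ_letters T Q i :
  exists2 F : seq A, size F <= 2 &
    forall j, near_occ T Q i j -> nth d Q (i - j) \in F.
Proof.
pose J := [seq j <- iota 0 i.+1 | near_occ T Q i j].
have sJ : sorted ltn J.
  by apply: sorted_filter; [exact: ltn_trans | exact: iota_ltn_sorted].
have nJ : {subset J <= near_occ T Q i} by move=> j; rewrite mem_filter => /andP[].
exists [seq nth d Q (i - j) | j <- take 2 J].
  by rewrite size_map size_take_min geq_minl.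
move=> j nj; have : j \in J.
  by rewrite mem_filter nj mem_iota /= ltnS; case/near_occP: nj => /andP[].
case: J sJ nJ => [|j0 [|j1 R]] //= sJ nJ.
  by case/predU1P => [->|//]; rewrite mem_head.
case/predU1P => [->|]; first by rewrite mem_head.
case/predU1P => [->|jR]; first by rewrite !inE eqxx orbT.
have [lt01 lt1j] : j0 < j1 /\ j1 < j.
  by case/andP: sJ => -> /(order_path_min ltn_trans)/allP/(_ j jR).
rewrite -(near_occ_letter_skip (nJ j0 _) (nJ j1 _) nj) ?inE ?eqxx ?orbT ?lt01 //.
Qed.

Lemma occ_set_nth_hole T Q i v :
  i < size T -> nth d T i \notin Q ->
  (forall j, near_occ T Q i j -> nth d Q (i - j) != v) ->
  occ (set_nth d T i v) Q = occ T Q.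
Proof.
move=> hi hole unforbidden.
have size_T' : size (set_nth d T i v) = size T by rewrite size_set_nth; apply/maxn_idPr.
rewrite !occE size_T'; apply: eq_filter => j.
have agree x : j + x != i -> nth d (set_nth d T i v) (j + x) = nth d T (j + x).
  by rewrite nth_set_nth /= => /negbTE ->.
have [covers|] := boolP (j <= i < j + size Q); last first.
  rewrite negb_and -!ltnNge => outside.
  have {}agree x : x < size Q -> nth d (set_nth d T i v) (j + x) = nth d T (j + x).
    by move=> hx; apply: agree; apply/eqP; case/orP: outside; lia.
  apply/occurs_atP/occurs_atP; rewrite size_T' => -[hj H]; split=> // x hx.
    by rewrite -agree ?H.
  by rewrite agree ?H.
have i_eq : j + (i - j) = i by lia.
have ij_lt : i - j < size Q by lia.
apply/occurs_atP/occurs_atP => -[hj H]; exfalso.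
- have near : near_occ T Q i j.
    by apply/near_occP; split=> // x hx nx; rewrite -agree // H.
  by move/eqP: (unforbidden j near); rewrite -H // i_eq nth_set_nth /= eqxx.
- by move: hole; rewrite -i_eq H // mem_nth.
Qed.
End Occurrences.

Definition completes (A : eqType) (U : seq A) (T : seq (option A)) :=
  all2 (fun u t => (t == None) || (t == Some u)) U T.

Lemma completes_size (A : eqType) (U : seq A) T : completes U T -> size U = size T.
Proof. by rewrite /completes all2E => /andP[/eqP]. Qed.

Lemma completes_map_Some (A : eqType) (U : seq A) : completes U (map Some U).
Proof. by elim: U => //= u U ->; rewrite eqxx. Qed.

Lemma completes_set_nth (A : eqType) (U : seq A) T i c :
  i < size T -> nth None T i = None ->
  completes U (set_nth None T i (Some c)) -> completes U T.
Proof.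
elim: T i U => [|t T IH] [|i] [|u U] //= hi hole /andP[hu hU].
  by rewrite hole hU.
by rewrite hu (IH i).
Qed.

Lemma hash_masked_completes (A : eqType) (S : seq A) S' k :
  hash_masked S S' k -> completes S S'.
Proof.
case=> + [+ _]; elim: S S' => [|s S IH] [|t S'] //= [size_S'] agree.
apply/andP; split; first by case: (agree 0 isT) => /= ->; rewrite eqxx ?orbT.
by apply: IH => // i; apply: (agree i.+1).
Qed.

Lemma dH_completes (A : eqType) (S U : seq A) T :
  completes S T -> completes U T -> dH S U <= count (fun c => c == None) T.
Proof.
rewrite /dH; elim: T S U => [|t T IH] [|s S] [|u U] //= /andP[hs hS] /andP[hu hU].
have {IH} := IH S U hS hU.
case: (t =P None) hs hu => [_ _ _|_ /eqP-> /eqP[->]]; first by case: (s != u) => /=; lia.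
by rewrite eqxx.
Qed.

Lemma exists_Some_notin (Sigma : finType) (F : seq (option Sigma)) :
  size F < #|Sigma| -> exists c, Some c \notin F.
Proof.
move=> small; have [c Fc|all_in] := pickP (fun c => Some c \notin F); first by exists c.
suff : #|Sigma| <= size F by rewrite leqNgt small.
rewrite cardE -(size_map Some); apply: uniq_leq_size => [|_ /mapP[c _ ->]].
  by rewrite (map_inj_uniq (@Some_inj _)) enum_uniq.
exact/negbFE/all_in.
Qed.

Lemma fill_holes (Sigma : finType) (P : seq Sigma) (T : seq (option Sigma)) :
  2 < #|Sigma| -> exists2 U, completes U T & occ U P = occ T (map Some P).
Proof.
move=> big; move nholes: (count (fun c => c == None) T) => n.
elim: n T nholes => [|n IH] T nholes.
  have -> : T = map Some (pmap id T).
    by elim: T nholes => [|[t|] T IHT] //= /IHT {1}->.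
  exists (pmap id T); first exact: completes_map_Some.
  by rewrite occ_map_inj; last exact: Some_inj.
have : None \in T by rewrite -has_pred1 has_count nholes.
set i := index None T => hasNone.
have hi : i < size T by rewrite index_mem.
have hole : nth None T i = None by rewrite nth_index.
have [F smallF letters] := near_occ_letters None T (map Some P) i.
have [c cF] := exists_Some_notin (leq_ltn_trans smallF big).
have [|U UT' occU] := IH (set_nth None T i (Some c)).
  by rewrite count_set_nth_ltn // nholes hole eqxx addn0 subn1.
exists U; first exact: completes_set_nth hi hole UT'.
rewrite occU occ_set_nth_hole ?hole //.
  by apply/mapP => -[].
by move=> j /letters; apply: contraTneq => ->.
Qed.

Theorem lemma11 (Sigma : finType) (S P : seq Sigma) (k y : nat)
  (S' : seq (option Sigma)) :
  3 < #|Sigma| ->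
  infix P S ->
  hash_masked S S' k ->
  0 < y ->
  size (occ S' (map Some P)) + y <= size (occ S P) ->
  exists S'' : seq Sigma,
    size S'' = size S /\ dH S S'' <= k /\
    size (occ S'' P) + y <= size (occ S P).
Proof.
(* Filling keeps the occurrences of S' exactly. *)
move=> big _ masked _ fewer.
have [U US' occU] := fill_holes P S' (ltnW big).
have SS' := hash_masked_completes masked.
exists U; split; last split.
- by rewrite (completes_size US') (completes_size SS').
- by case: masked => _ [_ <-]; apply: dH_completes.
- by rewrite occU.
Qed.
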